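(* Let $X$ be a set, $T:\mathcal P(X)\to\mathcal P(X)$ an order reversing quasi involution, and $X_0=\{x\in X: x\in T(\{x\})\}$. Call $K\subseteq X$ invariant if $TK=K$. (1) If $TX_0=X_0$, then $X_0$ is the unique invariant set. (2) If $TX_0\not\subseteq X_0$, then there is no invariant set. (3) There exist a set $X$ and an order reversing quasi involution $T$ on $\mathcal P(X)$ with $TX_0\subsetneq X_0$ having no invariant set; there exist such $X,T$ with $TX_0\subsetneq X_0$ having exactly one invariant set; and there exist such $X,T$ with $TX_0\subsetneq X_0$ having more than one invariant set.
   Context: $\mathcal P(X)$ denotes the power set of $X$. A map $T:\mathcal P(X)\to\mathcal P(X)$ is an order reversing quasi involution if for all $K,L\subseteq X$: (i) $K\subseteq TTK$, and (ii) $L\subseteq K$ implies $TK\subseteq TL$. *)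

Definition subset {X : Type} (A B : X -> Prop) : Prop := forall x, A x -> B x.
Definition seteq {X : Type} (A B : X -> Prop) : Prop := subset A B /\ subset B A.
Definition setT {X : Type} : X -> Prop := fun _ => True.
Definition set1 {X : Type} (a : X) : X -> Prop := fun x => x = a.

(* Order reversing quasi involution on P(X).  T is required to respect
   extensional equality of subsets (automatic for maps on the power set). *)
Definition order_rev_quasi_inv {X : Type} (T : (X -> Prop) -> (X -> Prop)) : Prop :=
  (forall K : X -> Prop, subset K (T (T K))) /\
  (forall K L : X -> Prop, subset L K -> subset (T K) (T L)).

Definition X0 {X : Type} (T : (X -> Prop) -> (X -> Prop)) : X -> Prop :=
  fun x => T (set1 x) x.

Definition invariant {X : Type} (T : (X -> Prop) -> (X -> Prop)) (K : X -> Prop) : Prop :=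
  seteq (T K) K.

Definition strict_subset {X : Type} (A B : X -> Prop) : Prop :=
  subset A B /\ ~ subset B A.

(* Antitonicity alone forces every invariant set K between T X0 and X0: if
   x is in K then {x} is contained in K, so x is in K = TK, which is
   contained in T{x}; hence K is contained in X0 and T X0 in TK = K.  The examples are polars
   K^R = {y | forall x in K, R x y} of symmetric relations R, i.e. graphs
   in which X0 is the set of looped vertices and the invariant sets are the
   cliques of looped vertices to which no further vertex is fully joined. *)


Lemma strict_subset_empty_l {X : Type} (A B : X -> Prop) (b : X) :
  (forall x, ~ A x) -> B b -> strict_subset A B.
Proof.
  intros A_empty Bb; split.
  - intros x Ax. destruct (A_empty x Ax).
  - intros B_sub_A. exact (A_empty b (B_sub_A b Bb)).
Qed.

Section Antitone.

Variables (X : Type) (T : (X -> Prop) -> (X -> Prop)).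
Hypothesis T_antitone : forall K L, subset L K -> subset (T K) (T L).

Lemma invariant_sub_X0 K : invariant T K -> subset K (X0 T).
Proof.
  intros [_ K_sub_TK] x Kx.
  apply (T_antitone K (set1 x)).
  - intros z ->. exact Kx.
  - exact (K_sub_TK x Kx).
Qed.

Lemma T_X0_sub_invariant K : invariant T K -> subset (T (X0 T)) K.
Proof.
  intros HK x Hx.
  apply (proj1 HK), (T_antitone (X0 T) K (invariant_sub_X0 K HK)), Hx.
Qed.

Lemma invariant_eq_X0 :
  invariant T (X0 T) -> forall K, invariant T K -> seteq K (X0 T).
Proof.
  intros [_ X0_sub_TX0] K HK. split.
  - exact (invariant_sub_X0 K HK).
  - intros x Hx. exact (T_X0_sub_invariant K HK x (X0_sub_TX0 x Hx)).
Qed.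

Lemma invariant_T_X0_sub_X0 K :
  invariant T K -> subset (T (X0 T)) (X0 T).
Proof.
  intros HK x Hx. exact (invariant_sub_X0 K HK x (T_X0_sub_invariant K HK x Hx)).
Qed.

End Antitone.

Section Polar.

Variables (X : Type) (R : X -> X -> Prop).

Definition polar (K : X -> Prop) : X -> Prop := fun y => forall x, K x -> R x y.

Lemma polar_antitone K L : subset L K -> subset (polar K) (polar L).
Proof. intros L_sub_K y Hy x Lx. exact (Hy x (L_sub_K x Lx)). Qed.

Lemma polar_quasi_inv :
  (forall x y, R x y -> R y x) -> order_rev_quasi_inv polar.
Proof.
  intros R_sym. split.
  - intros K x Kx y Hy. exact (R_sym x y (Hy x Kx)).
  - exact polar_antitone.
Qed.

Lemma X0_polar y : X0 polar y <-> R y y.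
Proof.
  split.
  - intros Hy. exact (Hy y eq_refl).
  - intros Ryy x ->. exact Ryy.
Qed.

Lemma invariant_polar_set1 a :
  (forall y, R a y <-> y = a) -> invariant polar (set1 a).
Proof.
  intros Ra. split.
  - intros y Hy. exact (proj1 (Ra y) (Hy a eq_refl)).
  - intros y -> x ->. exact (proj2 (Ra a) eq_refl).
Qed.

End Polar.

Arguments polar {X} R K _.

(* The looped vertices (b, true) are not joined to each other, and each is
   joined to the unlooped (b, false), so no looped clique is invariant. *)
Definition cross (x y : bool * bool) : Prop :=
  fst x = fst y /\ (snd x = true \/ snd y = true).

Lemma cross_sym x y : cross x y -> cross y x.
Proof. intros [E O]. split; [symmetry; exact E | tauto]. Qed.

Lemma X0_cross b : X0 (polar cross) (b, true).
Proof. apply X0_polar. split; [reflexivity | left; reflexivity]. Qed.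

Lemma polar_X0_cross_empty y : ~ polar cross (X0 (polar cross)) y.
Proof.
  intros Hy.
  destruct (Hy _ (X0_cross false)) as [Ef _], (Hy _ (X0_cross true)) as [Et _].
  simpl in Ef, Et. rewrite <- Ef in Et. discriminate.
Qed.

Lemma cross_no_invariant K : ~ invariant (polar cross) K.
Proof.
  intros HK.
  assert (K_looped : forall z, K z -> snd z = true).
  { intros z Kz.
    destruct (proj1 (X0_polar _ _ z) (invariant_sub_X0 _ _ (polar_antitone _ cross) K HK z Kz))
      as [_ [H | H]]; exact H. }
  destruct HK as [TK_sub_K K_sub_TK].
  assert (K_empty : forall x, ~ K x).
  { intros x Kx.
    assert (Kx' : K (fst x, false)).
    { apply TK_sub_K. intros z Kz. split.
      - exact (proj1 (K_sub_TK x Kx z Kz)).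
      - left. exact (K_looped z Kz). }
    discriminate (K_looped _ Kx'). }
  apply (K_empty (false, false)), TK_sub_K.
  intros z Kz. destruct (K_empty z Kz).
Qed.

Inductive three := t0 | t1 | t2.

Definition rel3 (x y : three) : Prop :=
  match x, y with
  | t0, t0 | t1, t2 | t2, t1 | t2, t2 => True
  | _, _ => False
  end.

Lemma rel3_sym x y : rel3 x y -> rel3 y x.
Proof. destruct x, y; simpl; tauto. Qed.

Lemma polar_X0_rel3_empty y : ~ polar rel3 (X0 (polar rel3)) y.
Proof.
  intros Hy.
  pose proof (Hy t0 (proj2 (X0_polar _ _ t0) I)) as H0.
  pose proof (Hy t2 (proj2 (X0_polar _ _ t2) I)) as H2.
  destruct y; simpl in *; assumption.
Qed.

Lemma rel3_invariant_eq_t0 L : invariant (polar rel3) L -> seteq L (set1 t0).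
Proof.
  intros HL.
  pose proof (invariant_sub_X0 _ _ (polar_antitone _ rel3) L HL) as L_sub_X0.
  destruct HL as [TL_sub_L L_sub_TL].
  assert (N1 : ~ L t1) by exact (fun H => proj1 (X0_polar _ _ t1) (L_sub_X0 t1 H)).
  assert (N2 : ~ L t2).
  { intros H. apply N1, TL_sub_L. intros [] Lz; simpl; auto.
    exact (L_sub_TL t2 H t0 Lz). }
  split.
  - intros [] Lz; [reflexivity | contradiction | contradiction].
  - intros y ->. apply TL_sub_L. intros [] Lz; simpl; tauto.
Qed.

Lemma polar_X0_eq_empty y : ~ polar (@eq bool) (X0 (polar (@eq bool))) y.
Proof.
  intros Hy.
  pose proof (Hy true (proj2 (X0_polar _ _ true) eq_refl)) as Et.
  pose proof (Hy false (proj2 (X0_polar _ _ false) eq_refl)) as Ef.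
  rewrite <- Et in Ef. discriminate.
Qed.

Lemma invariant_eq_set1 b : invariant (polar (@eq bool)) (set1 b).
Proof.
  apply invariant_polar_set1. intros y. split; intros E; symmetry; exact E.
Qed.

Theorem lemma6p2 :
  (forall (X : Type) (T : (X -> Prop) -> (X -> Prop)),
     order_rev_quasi_inv T ->
     invariant T (X0 T) ->
     forall K, invariant T K -> seteq K (X0 T)) /\
  (forall (X : Type) (T : (X -> Prop) -> (X -> Prop)),
     order_rev_quasi_inv T ->
     ~ subset (T (X0 T)) (X0 T) ->
     forall K, ~ invariant T K) /\
  (exists (X : Type) (T : (X -> Prop) -> (X -> Prop)),
     order_rev_quasi_inv T /\ strict_subset (T (X0 T)) (X0 T) /\
     forall K, ~ invariant T K) /\
  (exists (X : Type) (T : (X -> Prop) -> (X -> Prop)),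
     order_rev_quasi_inv T /\ strict_subset (T (X0 T)) (X0 T) /\
     exists K, invariant T K /\ forall L, invariant T L -> seteq L K) /\
  (exists (X : Type) (T : (X -> Prop) -> (X -> Prop)),
     order_rev_quasi_inv T /\ strict_subset (T (X0 T)) (X0 T) /\
     exists K L, invariant T K /\ invariant T L /\ ~ seteq K L).
Proof.
  split; [| split; [| split; [| split]]].
  - intros X T [_ T_antitone]. exact (invariant_eq_X0 X T T_antitone).
  - intros X T [_ T_antitone] not_sub K HK.
    exact (not_sub (invariant_T_X0_sub_X0 X T T_antitone K HK)).
  - exists (bool * bool)%type, (polar cross).
    split; [exact (polar_quasi_inv _ _ cross_sym) | split].
    + exact (strict_subset_empty_l _ _ _ polar_X0_cross_empty (X0_cross true)).
    + exact cross_no_invariant.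
  - exists three, (polar rel3).
    split; [exact (polar_quasi_inv _ _ rel3_sym) | split].
    + exact (strict_subset_empty_l _ _ t0 polar_X0_rel3_empty (proj2 (X0_polar _ _ t0) I)).
    + exists (set1 t0). split; [| exact rel3_invariant_eq_t0].
      apply invariant_polar_set1. intros []; simpl; intuition discriminate.
  - exists bool, (polar (@eq bool)).
    split; [exact (polar_quasi_inv _ _ (@eq_sym bool)) | split].
    + exact (strict_subset_empty_l _ _ true polar_X0_eq_empty (proj2 (X0_polar _ _ true) eq_refl)).
    + exists (set1 true), (set1 false).
      split; [exact (invariant_eq_set1 true) | split; [exact (invariant_eq_set1 false) |]].
      intros [E _]. discriminate (E true eq_refl).
Qed.
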